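(* Let $n\ge 3$ and let $L^B$ be a blow-up of $L\cong\mathbf{2}^n$ in which the atoms $q_1,\dots,q_n$ of $L$ are not replaced by longer chains (i.e. $|C_{q_i}|=1$ for all $i$). Then a vertex $x$ of $G(L^B)^{**}$ is isolated if and only if $x$ is an atom of $L^B$.
   Context: Blow-up: for $L\cong\mathbf{2}^n$ with atoms $q_1,\dots,q_n$, replace each $a\in L\setminus\{0,1\}$ by a finite chain $C_a$: $a=a^1\lessdot\cdots\lessdot a^{k_a}$ ($k_a\ge1$), keep $0,1$; elements of one chain are ordered along it, and for $u\in C_a,v\in C_b$ with $a\ne b$ ($C_0=\{0\},C_1=\{1\}$), $u\le v$ iff $a<b$ in $L$. $G(L^B)$ is the zero-divisor graph of $L^B$ (vertices: nonzero elements with a nonzero element meeting them in $0$; adjacency: meet $=0$). For $x\in L^B$, $x^\perp=\{z:x\wedge z=0\}$, $[x]=\{y: y^\perp=x^\perp\}$, and the classes are ordered by $[a]\le[b]$ iff $b^\perp\subseteq a^\perp$, with $[a]\wedge[b]=[a\wedge b]$. The graph $G(L^B)^{**}$ has the same vertex set as $G(L^B)$, and distinct vertices $x,y$ are adjacent iff either $[x]=[y]$, or $[x]\wedge[y]\neq[0]$ and $[x],[y]$ are incomparable (equivalently, $a\wedge b\ne0$, $a\not\le b$, $b\not\le a$ for all $a\in[x]$, $b\in[y]$). *)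

From mathcomp Require Import all_boot.
Set Implicit Arguments. Unset Strict Implicit. Unset Printing Implicit Defensive.

(* L = 2^n is modelled as {set 'I_n}; atoms are the singletons [set i].     *)
Definition inner (n : nat) (a : {set 'I_n}) : bool := (a != set0) && (a != setT).

(* Blow-up data: k a = |C_a| for inner a; C_0 = {0}, C_1 = {1}.            *)
Definition chainlen (n : nat) (k : {set 'I_n} -> nat) (a : {set 'I_n}) : nat :=
  if inner a then k a else 1.

(* Elements of L^B: pairs (a, i) meaning a^{i+1} in C_a, with i < |C_a|.   *)
Definition blowup_elem (n : nat) (k : {set 'I_n} -> nat)
  (p : {set 'I_n} * nat) : bool := p.2 < chainlen k p.1.

Definition BU (n : nat) (k : {set 'I_n} -> nat) :=
  {p : {set 'I_n} * nat | blowup_elem k p}.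

Definition BUle (n : nat) (k : {set 'I_n} -> nat) (x y : BU k) : Prop :=
  let a := (proj1_sig x).1 in let i := (proj1_sig x).2 in
  let b := (proj1_sig y).1 in let j := (proj1_sig y).2 in
  ((a == b) && (i <= j)) \/ (a \proper b).

Lemma blowup_bot (n : nat) (k : {set 'I_n} -> nat) : blowup_elem k (set0, 0).
Proof. by rewrite /blowup_elem /chainlen /inner eqxx. Qed.

Definition BUbot (n : nat) (k : {set 'I_n} -> nat) : BU k :=
  exist _ (set0, 0) (blowup_bot k).

Definition is_glb (n : nat) (k : {set 'I_n} -> nat) (x y m : BU k) : Prop :=
  BUle m x /\ BUle m y /\ (forall z, BUle z x -> BUle z y -> BUle z m).

Definition meet0 (n : nat) (k : {set 'I_n} -> nat) (x y : BU k) : Prop :=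
  is_glb x y (BUbot k).

Definition ZDvertex (n : nat) (k : {set 'I_n} -> nat) (x : BU k) : Prop :=
  x <> BUbot k /\ exists z, z <> BUbot k /\ meet0 x z.

(* [x] = [y] iff x^perp = y^perp ;  [x] <= [y] iff y^perp \subseteq x^perp. *)
Definition cls_eq (n : nat) (k : {set 'I_n} -> nat) (x y : BU k) : Prop :=
  forall z, meet0 x z <-> meet0 y z.
Definition cls_le (n : nat) (k : {set 'I_n} -> nat) (x y : BU k) : Prop :=
  forall z, meet0 y z -> meet0 x z.

(* Adjacency in G(L^B)^**: [x]=[y], or [x]/\[y] = [x/\y] <> [0] and [x],[y]
   incomparable. *)
Definition adj2star (n : nat) (k : {set 'I_n} -> nat) (x y : BU k) : Prop :=
  x <> y /\
  (cls_eq x y \/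
   ((exists m, is_glb x y m /\ ~ cls_eq m (BUbot k)) /\
    ~ cls_le x y /\ ~ cls_le y x)).

Definition isolated2star (n : nat) (k : {set 'I_n} -> nat) (x : BU k) : Prop :=
  forall y, ZDvertex y -> ~ adj2star x y.

Definition BUatom (n : nat) (k : {set 'I_n} -> nat) (x : BU k) : Prop :=
  x <> BUbot k /\ forall z, BUle z x -> z = BUbot k \/ z = x.

From mathcomp Require Import all_boot.
Set Implicit Arguments. Unset Strict Implicit. Unset Printing Implicit Defensive.

(* Everything in G(L^B)^** is governed by the projection of x in C_a to a:
   x /\ z = 0 iff the projections are disjoint, so [x] <= [y] iff the
   projection of x is contained in that of y. If the projection a of a vertex
   x has two points t, u and misses a point s, the bottom y of the chain over
   {t, s} (a proper element since n >= 3) meets x in the atom {t}, and neither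
   projection contains the other, so x is adjacent to y. If a = {t} is an atom,
   any y with [x] = [y] lies over {t} and thus equals x, while x /\ y <> 0
   forces t to lie under y, i.e. [x] <= [y]; so x is isolated. *)

Section BlowUp.

Variables (n : nat) (k : {set 'I_n} -> nat).
Hypothesis hk : forall a : {set 'I_n}, inner a -> 0 < k a.

Definition chainof (x : BU k) : {set 'I_n} := (sval x).1.

Lemma blowup_base (c : {set 'I_n}) : blowup_elem k (c, 0).
Proof. by rewrite /blowup_elem /chainlen /=; case: ifP => // /hk. Qed.

Definition base (c : {set 'I_n}) : BU k := exist _ (c, 0) (blowup_base c).

Lemma chainof_base (c : {set 'I_n}) : chainof (base c) = c.
Proof. by []. Qed.

Lemma chainof_eq0 (x : BU k) : chainof x = set0 -> x = BUbot k.
Proof.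
case: x => [[c j] hj]; rewrite /chainof /= => c0; apply: val_inj.
move: hj; rewrite /= {}c0.
by rewrite /blowup_elem /chainlen /inner eqxx; case: j.
Qed.

Lemma BUle_chainof (x y : BU k) : BUle x y -> chainof x \subset chainof y.
Proof. by rewrite /chainof => -[/andP[/eqP -> _] | /properP[]]. Qed.

Lemma base_le (c : {set 'I_n}) (x : BU k) :
  c \subset chainof x -> BUle (base c) x.
Proof.
move=> cx; rewrite /BUle /=.
by case: eqP => [-> | /eqP ne]; [left | right; rewrite properEneq ne].
Qed.

Lemma BUbot_le (x : BU k) : BUle (BUbot k) x.
Proof. exact: (base_le (sub0set _)). Qed.

Lemma meet0E (x z : BU k) : meet0 x z <-> chainof x :&: chainof z = set0.
Proof.
split=> [[_ [_ glb]] | xz0].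
  apply/setP=> t; rewrite !inE; apply/negbTE/andP=> -[tx tz].
  have tx1 : [set t] \subset chainof x by rewrite sub1set.
  have tz1 : [set t] \subset chainof z by rewrite sub1set.
  have /BUle_chainof := glb _ (base_le tx1) (base_le tz1).
  by rewrite sub1set inE.
split; [exact: BUbot_le | split; [exact: BUbot_le |]].
move=> w /BUle_chainof wx /BUle_chainof wz.
suff -> : w = BUbot k by apply: BUbot_le.
by apply/chainof_eq0/eqP; rewrite -subset0 -xz0 subsetI wx.
Qed.

Lemma cls_leE (x y : BU k) : cls_le x y <-> chainof x \subset chainof y.
Proof.
split=> [xy | xy z /meet0E yz0].
  have /xy/meet0E : meet0 y (base (~: chainof y)).
    by apply/meet0E; rewrite setICr.
  by rewrite -setD_eq0 setDE => ->.
by apply/meet0E/eqP; rewrite -subset0 -yz0 setSI.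
Qed.

Lemma cls_eqE (x y : BU k) : cls_eq x y <-> chainof x = chainof y.
Proof.
split=> [xy | xy z].
  by apply/eqP; rewrite eqEsubset; apply/andP; split; apply/cls_leE => z /xy.
by split=> /meet0E zz; apply/meet0E; rewrite ?xy // -xy.
Qed.

Lemma ZDvertexE (x : BU k) : ZDvertex x <-> inner (chainof x).
Proof.
rewrite /inner; split=> [[xb [z [zb /meet0E xz0]]] | /andP[x0 xT]].
  apply/andP; split; apply/eqP; first by move/chainof_eq0.
  by move=> xT; apply: zb; apply: chainof_eq0; rewrite -xz0 xT setTI.
split=> [xb | ]; first by move: x0; rewrite xb eqxx.
exists (base (~: chainof x)); split; last by apply/meet0E; rewrite setICr.
move/(congr1 chainof); rewrite /chainof /= => /eqP.
by rewrite -setCT (inj_eq (@setC_inj _)) (negbTE xT).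
Qed.

Lemma ZDvertex_pair (t s : 'I_n) : 2 < n -> ZDvertex (base [set t; s]).
Proof.
move=> n_gt2; apply/ZDvertexE; rewrite /inner chainof_base; apply/andP; split.
  by apply/set0Pn; exists t; rewrite !inE eqxx.
apply: contraTneq n_gt2 => tsT; rewrite -leqNgt.
by rewrite -[n](card_ord n) -cardsT -tsT cards2; case: (t != s).
Qed.

Hypothesis hatoms : forall i : 'I_n, k [set i] = 1.

Lemma chainof_atom (x : BU k) (t : 'I_n) :
  chainof x = [set t] -> x = base [set t].
Proof.
case: x => [[c j] hj]; rewrite /chainof /= => ct; apply: val_inj.
move: hj; rewrite /= {}ct.
by rewrite /blowup_elem /chainlen hatoms; case: ifP; case: j.
Qed.

Lemma BUatomE (x : BU k) : BUatom x <-> exists t, chainof x = [set t].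
Proof.
split=> [[xb atm] | [t xt]].
  have [t tx] : exists t, t \in chainof x.
    by apply/set0Pn/eqP => /chainof_eq0.
  exists t; case: (atm (base [set t])) => [| tb | <- //].
    by apply: base_le; rewrite sub1set.
  by move/(congr1 chainof)/setP/(_ t): tb; rewrite !inE eqxx.
split=> [xb | w /BUle_chainof].
  by move/(congr1 chainof)/setP/(_ t): xb; rewrite xt !inE eqxx.
rewrite xt subset1 => /orP[/eqP wt | /eqP /chainof_eq0]; last by left.
by right; rewrite (chainof_atom wt) (chainof_atom xt).
Qed.

Lemma is_glb_atom (x y : BU k) (t : 'I_n) :
  chainof x :&: chainof y = [set t] -> is_glb x y (base [set t]).
Proof.
move=> xyt; have /subsetIP[tx ty] : [set t] \subset chainof x :&: chainof y.
  by rewrite xyt.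
split; [exact: base_le | split; [exact: base_le |]].
move=> w /BUle_chainof wx /BUle_chainof wy.
have : chainof w \subset [set t] by rewrite -xyt subsetI wx.
rewrite subset1 => /orP[/eqP /chainof_atom -> | /eqP /chainof_eq0 ->].
  exact: base_le.
exact: BUbot_le.
Qed.

Lemma atom_isolated2star (x : BU k) : BUatom x -> isolated2star x.
Proof.
move=> /BUatomE[t xt] y _ [neq_xy].
case=> [/cls_eqE xy | [[m [[mx [my _]] m0]] [xy _]]].
  rewrite xt in xy.
  by apply: neq_xy; rewrite (chainof_atom xt) (chainof_atom (esym xy)).
apply/xy/cls_leE; rewrite xt.
have /BUle_chainof := mx; rewrite xt subset1 => /orP[/eqP mt | /eqP mb].
  by rewrite -mt BUle_chainof.
by case: m0; apply/cls_eqE.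
Qed.

Lemma adj2star_two_points (x : BU k) (t u s : 'I_n) :
  t \in chainof x -> u \in chainof x -> t != u ->
  s \notin chainof x -> adj2star x (base [set t; s]).
Proof.
move=> tx ux tu sx; set b := [set t; s].
have sb : s \in b by rewrite !inE eqxx orbT.
have ub : u \notin b.
  by rewrite !inE negb_or eq_sym tu; apply: contra sx => /eqP <-.
have xbt : chainof x :&: b = [set t].
  apply/setP=> v; rewrite !inE; case: (v =P t) => [-> | _]; first by rewrite tx.
  by case: (v =P s) => [-> |]; rewrite ?(negbTE sx) ?andbF.
split; first by move/(congr1 chainof)/setP/(_ s); rewrite sb (negbTE sx).
right; split.
  exists (base [set t]); split; first exact: is_glb_atom.
  by move/cls_eqE; rewrite chainof_base => /setP/(_ t); rewrite !inE eqxx.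
split; move/cls_leE/subsetP; [move/(_ u ux) | move/(_ s sb)].
  by rewrite (negbTE ub).
by rewrite (negbTE sx).
Qed.

End BlowUp.

Theorem mainTheorem6 (n : nat) (k : {set 'I_n} -> nat)
  (hn : 3 <= n)
  (hk : forall a : {set 'I_n}, inner a -> 0 < k a)
  (hatoms : forall i : 'I_n, k [set i] = 1)
  (x : BU k) :
  ZDvertex x -> (isolated2star x <-> BUatom x).
Proof.
move=> /(ZDvertexE hk) /andP[x0 xT].
split; last exact: atom_isolated2star.
move=> iso; apply/(BUatomE hk hatoms)/cards1P.
have /subsetPn[s _ sx] : ~~ ([set: 'I_n] \subset chainof x) by rewrite subTset.
rewrite eqn_leq card_gt0 x0 andbT leqNgt.
apply/negP => /card_gt1P[t [u [tx ux tu]]].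
exact: iso _ (ZDvertex_pair hk t s hn)
             (adj2star_two_points hk hatoms tx ux tu sx).
Qed.
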